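(* For every 3-periodic $T$ of $E$ at which they are defined, the centers $X_{88}$ (trilinears $h=\dfrac{1}{s_2+s_3-2s_1}$) and $X_{100}$ (trilinears $h=\dfrac{1}{s_2-s_3}$) lie on $E$, and the closure of the locus of each of them is all of $E$.
   Context: Fix real numbers $a>b>0$ and let $E$ be the ellipse $x^2/a^2+y^2/b^2=1$. A 3-periodic is a non-degenerate triangle $P_1P_2P_3$ with all vertices on $E$ such that at each vertex $P_j$ the normal line to $E$ at $P_j$ bisects the interior angle of the triangle at $P_j$. For a triangle let $s_1=|P_2P_3|$, $s_2=|P_3P_1|$, $s_3=|P_1P_2|$. Given a function $h(s_1,s_2,s_3)$, the center $X_h$ is the point with trilinears $p:q:r=h(s_1,s_2,s_3):h(s_2,s_3,s_1):h(s_3,s_1,s_2)$, i.e. the Cartesian point $\dfrac{p s_1P_1+q s_2P_2+r s_3P_3}{p s_1+q s_2+r s_3}$, defined when all of $p,q,r$ are defined and the denominator is nonzero. The locus of $X_h$ is the set of points $X_h(T)$ over all 3-periodics $T$ for which it is defined. *)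

From Stdlib Require Import Reals.
Open Scope R_scope.

Definition pt := (R * R)%type.

Definition dist (P Q : pt) : R :=
  sqrt ((fst P - fst Q) ^ 2 + (snd P - snd Q) ^ 2).

Definition cross (u v : pt) : R := fst u * snd v - snd u * fst v.
Definition vsub (P Q : pt) : pt := (fst P - fst Q, snd P - snd Q).

Definition on_ellipse (a b : R) (P : pt) : Prop :=
  (fst P) ^ 2 / a ^ 2 + (snd P) ^ 2 / b ^ 2 = 1.

Definition ellipse_normal (a b : R) (P : pt) : pt :=
  (fst P / a ^ 2, snd P / b ^ 2).

Definition bisector_dir (P Q S : pt) : pt :=
  let u := vsub Q P in let v := vsub S P in
  let du := dist Q P in let dv := dist S P in
  (fst u / du + fst v / dv, snd u / du + snd v / dv).

Definition normal_bisects (a b : R) (P Q S : pt) : Prop :=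
  cross (ellipse_normal a b P) (bisector_dir P Q S) = 0.

Definition nondegenerate (P1 P2 P3 : pt) : Prop :=
  cross (vsub P2 P1) (vsub P3 P1) <> 0.

Definition periodic3 (a b : R) (P1 P2 P3 : pt) : Prop :=
  nondegenerate P1 P2 P3 /\
  on_ellipse a b P1 /\ on_ellipse a b P2 /\ on_ellipse a b P3 /\
  normal_bisects a b P1 P2 P3 /\
  normal_bisects a b P2 P3 P1 /\
  normal_bisects a b P3 P1 P2.

Definition trilin_fun := R -> R -> R -> option R.

(* X_h of triangle P1P2P3: trilinears p:q:r = h(s1,s2,s3):h(s2,s3,s1):h(s3,s1,s2),
   Cartesian point (p s1 P1 + q s2 P2 + r s3 P3)/(p s1 + q s2 + r s3). *)
Definition center (h : trilin_fun) (P1 P2 P3 : pt) : option pt :=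
  let s1 := dist P2 P3 in let s2 := dist P3 P1 in let s3 := dist P1 P2 in
  match h s1 s2 s3, h s2 s3 s1, h s3 s1 s2 with
  | Some p, Some q, Some r =>
      let w1 := p * s1 in let w2 := q * s2 in let w3 := r * s3 in
      let d := w1 + w2 + w3 in
      if Req_EM_T d 0 then None
      else Some ((w1 * fst P1 + w2 * fst P2 + w3 * fst P3) / d,
                 (w1 * snd P1 + w2 * snd P2 + w3 * snd P3) / d)
  | _, _, _ => None
  end.

Definition h88 : trilin_fun := fun s1 s2 s3 =>
  if Req_EM_T (s2 + s3 - 2 * s1) 0 then None else Some (/ (s2 + s3 - 2 * s1)).

Definition h100 : trilin_fun := fun s1 s2 s3 =>
  if Req_EM_T (s2 - s3) 0 then None else Some (/ (s2 - s3)).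

Definition locus (a b : R) (h : trilin_fun) (X : pt) : Prop :=
  exists P1 P2 P3, periodic3 a b P1 P2 P3 /\ center h P1 P2 P3 = Some X.

Definition in_closure (S : pt -> Prop) (X : pt) : Prop :=
  forall eps, eps > 0 -> exists Y, S Y /\ dist X Y < eps.

(* Let [q] be the quadratic form [x^2/a^2 + y^2/b^2]. For points [P], [Q] of the ellipse the
   normal [n] at [P] satisfies [n . (Q - P) = - q (Q - P) / 2]. The bisector direction [u + v] of
   two unit vectors is orthogonal to [u - v], so the normal bisects the angle at [P] iff
   [q (Q - P) / |PQ| = q (S - P) / |PS|]: a triangle is 3-periodic iff [q (side) / side] is the
   same for its three sides.
   The center with trilinears [1 / L], [L = al s1 + be s2 + ga s3] and [al + be + ga = 0], which
   covers X88 and X100, is the barycenter with weights [w_i = s_i / L_i]. With chords proportional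
   to sides, [sum w_i w_j q (P_i - P_j)] is proportional to [s1 s2 s3 (L1 + L2 + L3) / (L1 L2 L3)],
   which vanishes; this is exactly the condition for a barycenter of points of the ellipse to lie
   on it. The ellipse is closed, so the closure of the locus stays on it.
   Conversely, the 3-periodics include the images under [(x, y) |-> (a x, b y)] of the triangles of
   the unit circle with [z1 z2 + z2 z3 + z3 z1 = c], for a constant [c] depending on [a, b].
   Rotating such a triangle gives a continuous family whose center turns by a half-turn over
   [t in [0, PI]], hence crosses every line through the origin; and the parameters where the
   center is undefined (some [L_i = 0]) are roots of nonzero cubics in [cos (2 t)], so they can be
   avoided arbitrarily close to any parameter. *)

From Pilot Require Import Defs.
From Stdlib Require Import Reals Lra Lia Psatz FunctionalExtensionality.
Open Scope R_scope.

Lemma sum_sq_eq0 (p q : R) : p ^ 2 + q ^ 2 = 0 -> p = 0 /\ q = 0.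
Proof. intros h. split; nra. Qed.

Lemma pow2_pos (x : R) : x <> 0 -> 0 < x ^ 2.
Proof. intros h. rewrite <- Rsqr_pow2. apply Rsqr_pos_lt, h. Qed.

Lemma abs_le_of_sq (u d : R) : 0 <= d -> u ^ 2 <= d ^ 2 -> Rabs u <= d.
Proof. intros hd h. apply Rabs_le. split; nra. Qed.

Definition dot (u v : pt) : R := fst u * fst v + snd u * snd v.

Definition negp (z : pt) : pt := (- fst z, - snd z).

Lemma dist_sym (P Q : pt) : Defs.dist P Q = Defs.dist Q P.
Proof. unfold Defs.dist. f_equal. ring. Qed.

Lemma dist_mul_self (P Q : pt) :
  Defs.dist P Q * Defs.dist P Q = (fst P - fst Q) ^ 2 + (snd P - snd Q) ^ 2.
Proof. unfold Defs.dist. apply sqrt_sqrt, Rplus_le_le_0_compat; apply pow2_ge_0. Qed.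

Lemma dist_self (P : pt) : Defs.dist P P = 0.
Proof. unfold Defs.dist. rewrite <- sqrt_0. f_equal. ring. Qed.

Lemma dist_pos (P Q : pt) : P <> Q -> 0 < Defs.dist P Q.
Proof.
  intros hPQ. destruct P as [x y], Q as [x' y'].
  pose proof (dist_mul_self (x, y) (x', y')) as hsq. cbn [fst snd] in hsq.
  assert (hd : 0 <= Defs.dist (x, y) (x', y')) by apply sqrt_pos.
  destruct (Req_dec (Defs.dist (x, y) (x', y')) 0) as [h0|h0]; [|lra].
  exfalso. apply hPQ. rewrite h0 in hsq.
  destruct (sum_sq_eq0 (x - x') (y - y')) as [hx hy]; [lra|].
  f_equal; lra.
Qed.

Lemma negp_involutive (P : pt) : negp (negp P) = P.
Proof. destruct P. unfold negp. cbn [fst snd]. f_equal; ring. Qed.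

Lemma dist_negp (P Q : pt) : Defs.dist (negp P) (negp Q) = Defs.dist P Q.
Proof. unfold Defs.dist, negp. cbn [fst snd]. f_equal. ring. Qed.

Lemma dist_le_abs (P Q : pt) : Defs.dist P Q <= Rabs (fst P - fst Q) + Rabs (snd P - snd Q).
Proof.
  unfold Defs.dist.
  rewrite <- (sqrt_pow2 (Rabs (fst P - fst Q) + Rabs (snd P - snd Q)))
    by (apply Rplus_le_le_0_compat; apply Rabs_pos).
  apply sqrt_le_1_alt. rewrite <- (pow2_abs (fst P - fst Q)), <- (pow2_abs (snd P - snd Q)).
  pose proof (Rabs_pos (fst P - fst Q)). pose proof (Rabs_pos (snd P - snd Q)). nra.
Qed.

Lemma continuity_pt_eps (f : R -> R) (x0 eps : R) : continuity_pt f x0 -> 0 < eps ->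
  exists d, 0 < d /\ forall x, Rabs (x - x0) < d -> Rabs (f x - f x0) < eps.
Proof.
  intros hf he. destruct (hf eps he) as (d & hd & H).
  exists d. split; [exact hd|]. intros x hx.
  destruct (Req_dec x x0) as [->|hne].
  - rewrite Rminus_diag, Rabs_R0. exact he.
  - apply (H x). split; [split; [exact I | auto] | exact hx].
Qed.

Lemma continuous_nonzero_interval (g : R -> R) (l h x : R) :
  continuity_pt g x -> g x <> 0 -> l < x < h ->
  exists l' h', l <= l' /\ l' < h' /\ h' <= h /\ forall y, l' < y < h' -> g y <> 0.
Proof.
  intros hg hx hlh. destruct (continuous_neq_0 g x hg hx) as [eps he].
  pose proof (cond_pos eps).
  exists (Rmax l (x - eps / 2)), (Rmin h (x + eps / 2)).
  pose proof (Rmax_l l (x - eps / 2)). pose proof (Rmax_r l (x - eps / 2)).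
  pose proof (Rmin_l h (x + eps / 2)). pose proof (Rmin_r h (x + eps / 2)).
  assert (Rmax l (x - eps / 2) < x) by (apply Rmax_lub_lt; lra).
  assert (x < Rmin h (x + eps / 2)) by (apply Rmin_glb_lt; lra).
  repeat split; try lra.
  intros y hy. replace y with (x + (y - x)) by ring. apply he. apply Rabs_def1; lra.
Qed.


Lemma vsub_eq0 (P Q : pt) : vsub P Q = (0, 0) -> P = Q.
Proof.
  destruct P, Q. unfold vsub. cbn [fst snd]. intros e. injection e as e1 e2. f_equal; lra.
Qed.

Lemma cross_vsub_self (P : pt) (v : pt) : cross (vsub P P) v = 0.
Proof. unfold cross, vsub. cbn [fst snd]. ring. Qed.

Lemma cross_eq0_scale (u v : pt) : cross u v = 0 -> u <> (0, 0) ->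
  exists t, v = (t * fst u, t * snd u).
Proof.
  destruct u as [p q], v as [x y]. unfold cross. cbn [fst snd]. intros h hu.
  destruct (Req_dec p 0) as [hp|hp].
  - assert (hq : q <> 0) by (intros ->; apply hu; rewrite hp; reflexivity).
    exists (y / q). f_equal; [|field; auto].
    apply (Rmult_eq_reg_l q); [|auto]. transitivity (p * y); [lra|]. rewrite hp. field. auto.
  - exists (x / p). f_equal; [field; auto|].
    apply (Rmult_eq_reg_l p); [|auto]. transitivity (q * x); [lra|]. field. auto.
Qed.

Lemma cross_eq0_iff_dot_eq0 (n w w' : pt) : dot w w' = 0 -> cross w w' <> 0 ->
  cross n w = 0 <-> dot n w' = 0.
Proof.
  intros hdot hcross.
  assert (hid : dot n w' * dot w w + cross w w' * cross n w = dot w w' * dot n w)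
    by (unfold dot, cross; ring).
  rewrite hdot, Rmult_0_l in hid.
  assert (hw : 0 < dot w w).
  { destruct (Req_dec (fst w) 0) as [h1|h1]; [destruct (Req_dec (snd w) 0) as [h2|h2]|].
    - exfalso. apply hcross. unfold cross. rewrite h1, h2. ring.
    - unfold dot. nra.
    - unfold dot. nra. }
  split; intros h.
  - rewrite h, Rmult_0_r, Rplus_0_r in hid. nra.
  - rewrite h, Rmult_0_l, Rplus_0_l in hid. apply Rmult_integral in hid. tauto.
Qed.

Lemma nondegenerate_rot (P1 P2 P3 : pt) : nondegenerate P1 P2 P3 -> nondegenerate P2 P3 P1.
Proof.
  unfold nondegenerate, cross, vsub. cbn [fst snd]. intros h e. apply h. rewrite <- e. ring.
Qed.

Lemma nondegenerate_sides_pos (P1 P2 P3 : pt) : nondegenerate P1 P2 P3 ->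
  0 < Defs.dist P2 P3 /\ 0 < Defs.dist P3 P1 /\ 0 < Defs.dist P1 P2.
Proof.
  assert (h12 : forall Q1 Q2 Q3, nondegenerate Q1 Q2 Q3 -> 0 < Defs.dist Q1 Q2).
  { intros Q1 Q2 Q3 h. apply dist_pos. intros ->. apply h, cross_vsub_self. }
  intros h. pose proof (nondegenerate_rot _ _ _ h) as h'.
  repeat split; [apply (h12 _ _ P1) | apply (h12 _ _ P2) | apply (h12 _ _ P3)];
    auto using nondegenerate_rot.
Qed.

(** * The ellipse *)

Definition ellq (a b : R) (v : pt) : R := fst v ^ 2 / a ^ 2 + snd v ^ 2 / b ^ 2.

Lemma ellq_vsub_sym (a b : R) (P Q : pt) : ellq a b (vsub P Q) = ellq a b (vsub Q P).
Proof. unfold ellq, vsub, Rdiv. cbn [fst snd]. ring. Qed.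

Lemma ellq_eq0 (a b : R) (v : pt) : a <> 0 -> b <> 0 -> ellq a b v = 0 -> v = (0, 0).
Proof.
  intros ha hb h. destruct v as [x y]. unfold ellq in h. cbn [fst snd] in h.
  assert (0 < / a ^ 2) by (apply Rinv_0_lt_compat, pow2_pos; auto).
  assert (0 < / b ^ 2) by (apply Rinv_0_lt_compat, pow2_pos; auto).
  unfold Rdiv in h. pose proof (pow2_ge_0 x). pose proof (pow2_ge_0 y).
  assert (x ^ 2 = 0) by nra. assert (y ^ 2 = 0) by nra.
  f_equal; nra.
Qed.

Lemma normal_dot_chord (a b : R) (P Q : pt) : a <> 0 -> b <> 0 ->
  on_ellipse a b P -> on_ellipse a b Q ->
  dot (ellipse_normal a b P) (vsub Q P) = - ellq a b (vsub Q P) / 2.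
Proof.
  intros ha hb hP hQ. destruct P as [x y], Q as [x' y'].
  unfold on_ellipse, dot, ellipse_normal, ellq, vsub in *. cbn [fst snd] in *.
  transitivity (((x' ^ 2 / a ^ 2 + y' ^ 2 / b ^ 2) - (x ^ 2 / a ^ 2 + y ^ 2 / b ^ 2)
                  - ((x' - x) ^ 2 / a ^ 2 + (y' - y) ^ 2 / b ^ 2)) / 2); [field; auto|].
  rewrite hP, hQ. field; auto.
Qed.

Lemma ellipse_collinear (a b : R) (P1 P2 P3 : pt) : a <> 0 -> b <> 0 ->
  on_ellipse a b P1 -> on_ellipse a b P2 -> on_ellipse a b P3 -> P1 <> P2 ->
  cross (vsub P2 P1) (vsub P3 P1) = 0 -> P3 = P1 \/ P3 = P2.
Proof.
  intros ha hb h1 h2 h3 h12 hc.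
  assert (hu : vsub P2 P1 <> (0, 0)) by (intros e; apply h12; symmetry; apply vsub_eq0, e).
  destruct (cross_eq0_scale _ _ hc hu) as [t ht].
  destruct P1 as [x1 y1], P2 as [x2 y2], P3 as [x3 y3].
  unfold vsub, on_ellipse in *; cbn [fst snd] in *. injection ht as hx hy.
  set (p := x2 - x1) in *. set (q := y2 - y1) in *.
  replace x3 with (x1 + t * p) in * by lra. replace y3 with (y1 + t * q) in * by lra.
  replace x2 with (x1 + p) in * by (unfold p; ring). replace y2 with (y1 + q) in * by (unfold q; ring).
  set (B := 2 * x1 * p / a ^ 2 + 2 * y1 * q / b ^ 2).
  set (Q := p ^ 2 / a ^ 2 + q ^ 2 / b ^ 2).
  assert (hQ : 0 < Q).
  { assert (0 < / a ^ 2) by (apply Rinv_0_lt_compat, pow2_pos; auto).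
    assert (0 < / b ^ 2) by (apply Rinv_0_lt_compat, pow2_pos; auto).
    destruct (Req_dec p 0) as [hp|hp]; [destruct (Req_dec q 0) as [hq|hq]|].
    - exfalso. apply hu. rewrite hp, hq. reflexivity.
    - unfold Q, Rdiv. pose proof (pow2_pos q hq). nra.
    - unfold Q, Rdiv. pose proof (pow2_pos p hp). nra. }
  assert (e2 : B + Q = 0).
  { transitivity (((x1 + p) ^ 2 / a ^ 2 + (y1 + q) ^ 2 / b ^ 2) - (x1 ^ 2 / a ^ 2 + y1 ^ 2 / b ^ 2));
      [unfold B, Q; field; auto | lra]. }
  assert (e3 : t * B + t ^ 2 * Q = 0).
  { transitivity (((x1 + t * p) ^ 2 / a ^ 2 + (y1 + t * q) ^ 2 / b ^ 2) - (x1 ^ 2 / a ^ 2 + y1 ^ 2 / b ^ 2));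
      [unfold B, Q; field; auto | lra]. }
  assert (ht : t * (t - 1) = 0).
  { apply (Rmult_eq_reg_r Q); [|lra]. replace B with (- Q) in e3 by lra. lra. }
  apply Rmult_integral in ht as [ht|ht].
  - left. subst t. f_equal; ring.
  - right. replace t with 1 by lra. f_equal; ring.
Qed.

Lemma ellipse_same_line (a b : R) (X Y : pt) : a <> 0 -> b <> 0 ->
  on_ellipse a b X -> on_ellipse a b Y -> cross X Y = 0 -> Y = X \/ Y = negp X.
Proof.
  intros ha hb hX hY hc.
  assert (hX0 : X <> (0, 0)).
  { intros ->. unfold on_ellipse in hX. cbn [fst snd] in hX. field_simplify in hX; auto. lra. }
  destruct (cross_eq0_scale X Y hc hX0) as [t ->].
  unfold on_ellipse in hX, hY. cbn [fst snd] in hY.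
  assert (ht : t ^ 2 = 1).
  { rewrite <- hY. transitivity (t ^ 2 * (fst X ^ 2 / a ^ 2 + snd X ^ 2 / b ^ 2)); [rewrite hX; ring|].
    field. auto. }
  assert (ht' : (t - 1) * (t + 1) = 0) by nra.
  apply Rmult_integral in ht' as [e|e]; [left | right]; destruct X; unfold negp; cbn [fst snd].
  - replace t with 1 by lra. f_equal; ring.
  - replace t with (-1) by lra. f_equal; ring.
Qed.

Lemma ellq_lipschitz (a b : R) (X Y : pt) : 0 < a -> 0 < b -> Defs.dist X Y <= 1 ->
  Rabs (ellq a b X - ellq a b Y) <=
  ((2 * Rabs (fst X) + 1) / a ^ 2 + (2 * Rabs (snd X) + 1) / b ^ 2) * Defs.dist X Y.
Proof.
  intros ha hb hd1.
  destruct X as [x y], Y as [x' y']. unfold ellq. cbn [fst snd].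
  pose proof (dist_mul_self (x, y) (x', y')) as hsq. cbn [fst snd] in hsq.
  set (d := Defs.dist (x, y) (x', y')) in *.
  assert (hd0 : 0 <= d) by apply sqrt_pos.
  assert (hdx : Rabs (x' - x) <= d).
  { apply abs_le_of_sq; [lra|]. pose proof (pow2_ge_0 (y - y')). nra. }
  assert (hdy : Rabs (y' - y) <= d).
  { apply abs_le_of_sq; [lra|]. pose proof (pow2_ge_0 (x - x')). nra. }
  assert (hsq_bound : forall u v, Rabs (v - u) <= d -> Rabs (u ^ 2 - v ^ 2) <= (2 * Rabs u + 1) * d).
  { intros u v huv. replace (u ^ 2 - v ^ 2) with (- ((v - u) * (2 * u + (v - u)))) by ring.
    rewrite Rabs_Ropp, Rabs_mult.
    pose proof (Rabs_triang (2 * u) (v - u)) as ht. rewrite Rabs_mult, (Rabs_right 2) in ht by lra.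
    pose proof (Rabs_pos (v - u)). pose proof (Rabs_pos u). nra. }
  assert (ha2 : 0 < / a ^ 2) by (apply Rinv_0_lt_compat, pow_lt; lra).
  assert (hb2 : 0 < / b ^ 2) by (apply Rinv_0_lt_compat, pow_lt; lra).
  replace (x ^ 2 / a ^ 2 + y ^ 2 / b ^ 2 - (x' ^ 2 / a ^ 2 + y' ^ 2 / b ^ 2))
    with ((x ^ 2 - x' ^ 2) * / a ^ 2 + (y ^ 2 - y' ^ 2) * / b ^ 2) by (unfold Rdiv; ring).
  eapply Rle_trans; [apply Rabs_triang|]. rewrite !Rabs_mult, !(Rabs_right (/ _)) by lra.
  pose proof (hsq_bound x x' hdx). pose proof (hsq_bound y y' hdy). unfold Rdiv. nra.
Qed.

Lemma closure_on_ellipse (a b : R) (S : pt -> Prop) (X : pt) : 0 < a -> 0 < b ->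
  (forall Y, S Y -> on_ellipse a b Y) -> in_closure S X -> on_ellipse a b X.
Proof.
  intros ha hb hS hX. unfold on_ellipse. fold (ellq a b X).
  set (M := (2 * Rabs (fst X) + 1) / a ^ 2 + (2 * Rabs (snd X) + 1) / b ^ 2).
  assert (hM : 0 < M).
  { pose proof (Rabs_pos (fst X)). pose proof (Rabs_pos (snd X)).
    unfold M. apply Rplus_lt_0_compat; apply Rdiv_lt_0_compat; try apply pow_lt; lra. }
  destruct (Req_dec (ellq a b X) 1) as [h|h]; [exact h|exfalso].
  set (g := Rabs (ellq a b X - 1)).
  assert (hg : 0 < g) by (apply Rabs_pos_lt; lra).
  destruct (hX (Rmin 1 (g / (2 * M))) ltac:(apply Rmin_pos; [lra | apply Rdiv_lt_0_compat; lra]))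
    as (Y & hY & hXY).
  pose proof (Rmin_l 1 (g / (2 * M))). pose proof (Rmin_r 1 (g / (2 * M))).
  pose proof (ellq_lipschitz a b X Y ha hb ltac:(lra)) as hl. fold M in hl.
  pose proof (hS Y hY) as hY1. unfold on_ellipse in hY1. fold (ellq a b Y) in hY1.
  rewrite hY1 in hl. fold g in hl.
  assert (M * Defs.dist X Y < M * (g / (2 * M))) by (apply Rmult_lt_compat_l; lra).
  assert (M * (g / (2 * M)) = g / 2) by (field; lra).
  lra.
Qed.

(** * 3-periodics *)

Definition unit_dir (P Q : pt) : pt :=
  (fst (vsub Q P) / Defs.dist Q P, snd (vsub Q P) / Defs.dist Q P).

Definition chord_ratio (a b : R) (P Q : pt) : R := ellq a b (vsub Q P) / Defs.dist Q P.

Lemma dot_unit_dir (P Q : pt) : P <> Q -> dot (unit_dir P Q) (unit_dir P Q) = 1.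
Proof.
  intros hPQ. pose proof (dist_pos Q P (not_eq_sym hPQ)) as hd.
  pose proof (dist_mul_self Q P) as hsq.
  unfold dot, unit_dir, vsub in *. cbn [fst snd] in *.
  transitivity (((fst Q - fst P) ^ 2 + (snd Q - snd P) ^ 2) / (Defs.dist Q P * Defs.dist Q P));
    [field; lra|].
  rewrite <- hsq. field. lra.
Qed.

Lemma normal_bisects_iff (a b : R) (P Q S : pt) : a <> 0 -> b <> 0 ->
  on_ellipse a b P -> on_ellipse a b Q -> on_ellipse a b S ->
  cross (vsub Q P) (vsub S P) <> 0 ->
  normal_bisects a b P Q S <-> chord_ratio a b P Q = chord_ratio a b P S.
Proof.
  intros ha hb hP hQ hS hnd.
  assert (hQP : P <> Q) by (intros <-; apply hnd, cross_vsub_self).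
  assert (hSP : P <> S).
  { intros <-. apply hnd. unfold cross, vsub. cbn [fst snd]. ring. }
  pose proof (dist_pos Q P (not_eq_sym hQP)) as dQ.
  pose proof (dist_pos S P (not_eq_sym hSP)) as dS.
  set (u := unit_dir P Q). set (v := unit_dir P S).
  pose proof (dot_unit_dir P Q hQP) as hu. pose proof (dot_unit_dir P S hSP) as hv.
  fold u in hu. fold v in hv.
  assert (hdot : dot (fst u + fst v, snd u + snd v) (fst u - fst v, snd u - snd v) = 0).
  { unfold dot in *. cbn [fst snd]. lra. }
  assert (hcross : cross (fst u + fst v, snd u + snd v) (fst u - fst v, snd u - snd v) <> 0).
  { intros h. apply hnd. unfold u, v, unit_dir, cross in *. cbn [fst snd] in *.
    set (dq := Defs.dist Q P) in *. set (ds := Defs.dist S P) in *.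
    transitivity (- (dq * ds) / 2 *
      ((fst (vsub Q P) / dq + fst (vsub S P) / ds) * (snd (vsub Q P) / dq - snd (vsub S P) / ds) -
       (snd (vsub Q P) / dq + snd (vsub S P) / ds) * (fst (vsub Q P) / dq - fst (vsub S P) / ds)));
      [field; lra|].
    rewrite h. ring. }
  unfold normal_bisects.
  change (bisector_dir P Q S) with (fst u + fst v, snd u + snd v).
  (* [u + v] and [u - v] are orthogonal: the normal is parallel to [u + v] iff orthogonal to [u - v]. *)
  rewrite (cross_eq0_iff_dot_eq0 _ _ _ hdot hcross).
  assert (hsplit : dot (ellipse_normal a b P) (fst u - fst v, snd u - snd v)
    = dot (ellipse_normal a b P) (vsub Q P) / Defs.dist Q P
      - dot (ellipse_normal a b P) (vsub S P) / Defs.dist S P).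
  { unfold u, v, unit_dir, dot. cbn [fst snd]. field. lra. }
  rewrite hsplit, !normal_dot_chord by auto.
  unfold chord_ratio. split; intros h.
  - apply (Rmult_eq_reg_l (- / 2)); [|lra]. lra.
  - lra.
Qed.

Lemma chord_ratio_sym (a b : R) (P Q : pt) : chord_ratio a b P Q = chord_ratio a b Q P.
Proof. unfold chord_ratio. rewrite ellq_vsub_sym, dist_sym. reflexivity. Qed.

Lemma ellq_chord (a b : R) (P Q : pt) : Defs.dist P Q <> 0 ->
  ellq a b (vsub P Q) = chord_ratio a b P Q * Defs.dist P Q.
Proof.
  intros hd. unfold chord_ratio. rewrite ellq_vsub_sym, (dist_sym Q P). field. auto.
Qed.

Lemma periodic3_iff (a b : R) (P1 P2 P3 : pt) : a <> 0 -> b <> 0 ->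
  periodic3 a b P1 P2 P3 <->
  nondegenerate P1 P2 P3 /\ on_ellipse a b P1 /\ on_ellipse a b P2 /\ on_ellipse a b P3 /\
  chord_ratio a b P2 P3 = chord_ratio a b P1 P2 /\ chord_ratio a b P3 P1 = chord_ratio a b P1 P2.
Proof.
  intros ha hb. unfold periodic3.
  split; intros [hnd [h1 [h2 [h3 rest]]]]; do 4 (split; [assumption|]);
    pose proof (nondegenerate_rot _ _ _ hnd) as hnd2;
    pose proof (nondegenerate_rot _ _ _ hnd2) as hnd3;
    rewrite (normal_bisects_iff a b P1 P2 P3), (normal_bisects_iff a b P2 P3 P1),
      (normal_bisects_iff a b P3 P1 P2) in * by assumption;
    rewrite (chord_ratio_sym a b P2 P1), (chord_ratio_sym a b P3 P2), (chord_ratio_sym a b P1 P3) in *;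
    lra.
Qed.

(** * Centers with trilinears [1 / (al s1 + be s2 + ga s3)] *)

Definition lin3 (al be ga s1 s2 s3 : R) : R := al * s1 + be * s2 + ga * s3.

Definition hlin (al be ga : R) : trilin_fun := fun s1 s2 s3 =>
  if Req_EM_T (lin3 al be ga s1 s2 s3) 0 then None else Some (/ lin3 al be ga s1 s2 s3).

(* The barycentric weight [s1 / lin3 al be ga s1 s2 s3] of the center with trilinears
   [1 / lin3 al be ga], multiplied by the product of the three values of [lin3]. *)
Definition lin_weight (al be ga s1 s2 s3 : R) : R :=
  s1 * lin3 al be ga s2 s3 s1 * lin3 al be ga s3 s1 s2.

Definition wsum (w1 w2 w3 : R) (P1 P2 P3 : pt) : pt :=
  (w1 * fst P1 + w2 * fst P2 + w3 * fst P3, w1 * snd P1 + w2 * snd P2 + w3 * snd P3).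

Definition barycenter (w1 w2 w3 : R) (P1 P2 P3 : pt) : pt :=
  (fst (wsum w1 w2 w3 P1 P2 P3) / (w1 + w2 + w3), snd (wsum w1 w2 w3 P1 P2 P3) / (w1 + w2 + w3)).

Lemma lin3_scale (al be ga m s1 s2 s3 : R) :
  lin3 al be ga (s1 / m) (s2 / m) (s3 / m) = lin3 al be ga s1 s2 s3 / m.
Proof. unfold lin3, Rdiv. ring. Qed.

Lemma lin_weight_scale (al be ga m s1 s2 s3 : R) :
  lin_weight al be ga (s1 / m) (s2 / m) (s3 / m) = (/ m) ^ 3 * lin_weight al be ga s1 s2 s3.
Proof. unfold lin_weight, lin3, Rdiv. ring. Qed.

Lemma barycenter_scale (m w1 w2 w3 : R) (P1 P2 P3 : pt) : m <> 0 ->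
  barycenter (m * w1) (m * w2) (m * w3) P1 P2 P3 = barycenter w1 w2 w3 P1 P2 P3.
Proof.
  intros hm. unfold barycenter, wsum. cbn [fst snd].
  replace (m * w1 + m * w2 + m * w3) with (m * (w1 + w2 + w3)) by ring.
  destruct (Req_dec (w1 + w2 + w3) 0) as [h0|h0].
  - rewrite h0, Rmult_0_r. unfold Rdiv. rewrite Rinv_0, !Rmult_0_r. reflexivity.
  - f_equal; field; auto.
Qed.

Lemma center_hlin_Some (al be ga : R) (P1 P2 P3 X : pt) :
  let s1 := Defs.dist P2 P3 in let s2 := Defs.dist P3 P1 in let s3 := Defs.dist P1 P2 in
  let W1 := lin_weight al be ga s1 s2 s3 in let W2 := lin_weight al be ga s2 s3 s1 in
  let W3 := lin_weight al be ga s3 s1 s2 in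
  center (hlin al be ga) P1 P2 P3 = Some X <->
  lin3 al be ga s1 s2 s3 <> 0 /\ lin3 al be ga s2 s3 s1 <> 0 /\ lin3 al be ga s3 s1 s2 <> 0 /\
  W1 + W2 + W3 <> 0 /\ X = barycenter W1 W2 W3 P1 P2 P3.
Proof.
  intros s1 s2 s3 W1 W2 W3. unfold center, hlin. fold s1 s2 s3.
  destruct (Req_EM_T (lin3 al be ga s1 s2 s3) 0) as [e1|n1];
    [split; [discriminate | tauto]|].
  destruct (Req_EM_T (lin3 al be ga s2 s3 s1) 0) as [e2|n2];
    [split; [discriminate | tauto]|].
  destruct (Req_EM_T (lin3 al be ga s3 s1 s2) 0) as [e3|n3];
    [split; [discriminate | tauto]|].
  set (L1 := lin3 al be ga s1 s2 s3) in *. set (L2 := lin3 al be ga s2 s3 s1) in *.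
  set (L3 := lin3 al be ga s3 s1 s2) in *.
  assert (hL : / (L1 * L2 * L3) <> 0)
    by (apply Rinv_neq_0_compat; repeat apply Rmult_integral_contrapositive; auto).
  assert (e : / L1 * s1 + / L2 * s2 + / L3 * s3 = / (L1 * L2 * L3) * (W1 + W2 + W3))
    by (unfold W1, W2, W3, lin_weight; fold L1 L2 L3; field; auto).
  assert (hbar : barycenter W1 W2 W3 P1 P2 P3 = barycenter (/ L1 * s1) (/ L2 * s2) (/ L3 * s3) P1 P2 P3).
  { rewrite <- (barycenter_scale (/ (L1 * L2 * L3)) W1 W2 W3) by auto. f_equal;
      unfold W1, W2, W3, lin_weight; fold L1 L2 L3; field; auto. }
  cbv zeta.
  destruct (Req_EM_T (/ L1 * s1 + / L2 * s2 + / L3 * s3) 0) as [e0|n0].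
  - split; [discriminate|]. intros (_ & _ & _ & hW & _).
    rewrite e in e0. apply Rmult_integral in e0. tauto.
  - change (Some (barycenter (/ L1 * s1) (/ L2 * s2) (/ L3 * s3) P1 P2 P3) = Some X <->
      L1 <> 0 /\ L2 <> 0 /\ L3 <> 0 /\ W1 + W2 + W3 <> 0 /\ X = barycenter W1 W2 W3 P1 P2 P3).
    rewrite hbar. split.
    + intros h. injection h as <-. repeat split; auto. intros hW. apply n0. rewrite e, hW. ring.
    + intros (_ & _ & _ & _ & ->). reflexivity.
Qed.

Lemma ellq_wsum (a b w1 w2 w3 : R) (P1 P2 P3 : pt) : a <> 0 -> b <> 0 ->
  ellq a b (wsum w1 w2 w3 P1 P2 P3) =
  (w1 + w2 + w3) * (w1 * ellq a b P1 + w2 * ellq a b P2 + w3 * ellq a b P3)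
  - (w1 * w2 * ellq a b (vsub P1 P2) + w2 * w3 * ellq a b (vsub P2 P3)
     + w3 * w1 * ellq a b (vsub P3 P1)).
Proof. intros ha hb. unfold ellq, wsum, vsub. cbn [fst snd]. field. auto. Qed.

(* With chords proportional to the sides, the cross terms of [ellq_wsum] add up to a multiple
   of [al + be + ga]. *)
Lemma ellq_wsum_lin_weight (a b al be ga mu s1 s2 s3 : R) (P1 P2 P3 : pt) :
  a <> 0 -> b <> 0 -> al + be + ga = 0 ->
  on_ellipse a b P1 -> on_ellipse a b P2 -> on_ellipse a b P3 ->
  ellq a b (vsub P2 P3) = mu * s1 -> ellq a b (vsub P3 P1) = mu * s2 ->
  ellq a b (vsub P1 P2) = mu * s3 ->
  let W1 := lin_weight al be ga s1 s2 s3 in let W2 := lin_weight al be ga s2 s3 s1 in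
  let W3 := lin_weight al be ga s3 s1 s2 in
  ellq a b (wsum W1 W2 W3 P1 P2 P3) = (W1 + W2 + W3) ^ 2.
Proof.
  intros ha hb hsum h1 h2 h3 hq1 hq2 hq3 W1 W2 W3.
  rewrite ellq_wsum, hq1, hq2, hq3 by auto.
  unfold on_ellipse in h1, h2, h3. fold (ellq a b P1) (ellq a b P2) (ellq a b P3) in h1, h2, h3.
  rewrite h1, h2, h3.
  unfold W1, W2, W3, lin_weight, lin3. replace ga with (- al - be) by lra. ring.
Qed.

Lemma barycenter_on_ellipse (a b w1 w2 w3 : R) (P1 P2 P3 : pt) : a <> 0 -> b <> 0 ->
  w1 + w2 + w3 <> 0 -> ellq a b (wsum w1 w2 w3 P1 P2 P3) = (w1 + w2 + w3) ^ 2 ->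
  on_ellipse a b (barycenter w1 w2 w3 P1 P2 P3).
Proof.
  intros ha hb hw hq. unfold on_ellipse, barycenter. unfold ellq in hq.
  set (N := wsum w1 w2 w3 P1 P2 P3) in *. cbn [fst snd].
  replace 1 with ((fst N ^ 2 / a ^ 2 + snd N ^ 2 / b ^ 2) / (w1 + w2 + w3) ^ 2)
    by (rewrite hq; field; auto).
  field. auto.
Qed.

Lemma wsum_eq0_nondegenerate (w1 w2 w3 : R) (P1 P2 P3 : pt) : nondegenerate P1 P2 P3 ->
  w1 + w2 + w3 = 0 -> wsum w1 w2 w3 P1 P2 P3 = (0, 0) -> w1 = 0 /\ w2 = 0 /\ w3 = 0.
Proof.
  unfold nondegenerate, wsum, cross, vsub. cbn [fst snd]. intros hnd hw e. injection e as ex ey.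
  set (det := (fst P2 - fst P1) * (snd P3 - snd P1) - (snd P2 - snd P1) * (fst P3 - fst P1)) in *.
  replace w1 with (- w2 - w3) in ex, ey by lra.
  assert (h2 : w2 * det = 0).
  { unfold det. transitivity ((snd P3 - snd P1) * (-(w2 + w3) * fst P1 + w2 * fst P2 + w3 * fst P3)
      - (fst P3 - fst P1) * (-(w2 + w3) * snd P1 + w2 * snd P2 + w3 * snd P3)); [ring|].
    replace (-(w2 + w3)) with (- w2 - w3) by ring. rewrite ex, ey. ring. }
  assert (h3 : w3 * det = 0).
  { unfold det. transitivity ((fst P2 - fst P1) * (-(w2 + w3) * snd P1 + w2 * snd P2 + w3 * snd P3)
      - (snd P2 - snd P1) * (-(w2 + w3) * fst P1 + w2 * fst P2 + w3 * fst P3)); [ring|].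
    replace (-(w2 + w3)) with (- w2 - w3) by ring. rewrite ex, ey. ring. }
  apply Rmult_integral in h2 as [h2|h2]; [|contradiction].
  apply Rmult_integral in h3 as [h3|h3]; [|contradiction].
  lra.
Qed.

Lemma center_hlin_on_ellipse (a b al be ga : R) (P1 P2 P3 X : pt) :
  a <> 0 -> b <> 0 -> al + be + ga = 0 ->
  periodic3 a b P1 P2 P3 -> center (hlin al be ga) P1 P2 P3 = Some X -> on_ellipse a b X.
Proof.
  intros ha hb hsum hper hX.
  apply periodic3_iff in hper as (hnd & h1 & h2 & h3 & r23 & r31); auto.
  destruct (nondegenerate_sides_pos _ _ _ hnd) as (d23 & d31 & d12).
  apply center_hlin_Some in hX as (_ & _ & _ & hW & ->).
  apply barycenter_on_ellipse; auto.
  apply (ellq_wsum_lin_weight a b al be ga (chord_ratio a b P1 P2)); auto;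
    rewrite ellq_chord by lra; congruence.
Qed.

(** * Triangles of the unit circle *)

Definition sqnorm (z : pt) : R := fst z ^ 2 + snd z ^ 2.

Definition cmul (z w : pt) : pt :=
  (fst z * fst w - snd z * snd w, fst z * snd w + snd z * fst w).

Definition sigma2 (z1 z2 z3 : pt) : pt :=
  (fst (cmul z1 z2) + fst (cmul z2 z3) + fst (cmul z3 z1),
   snd (cmul z1 z2) + snd (cmul z2 z3) + snd (cmul z3 z1)).

Definition stretch (a b : R) (z : pt) : pt := (a * fst z, b * snd z).

Lemma sigma2_rot (z1 z2 z3 : pt) : sigma2 z2 z3 z1 = sigma2 z1 z2 z3.
Proof. unfold sigma2. f_equal; ring. Qed.

Lemma cmul_comm (z w : pt) : cmul z w = cmul w z.
Proof. unfold cmul. f_equal; ring. Qed.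

Lemma sqnorm_vsub_sym (z w : pt) : sqnorm (vsub z w) = sqnorm (vsub w z).
Proof. unfold sqnorm, vsub. cbn [fst snd]. ring. Qed.

Lemma sqnorm_vsub_negp (z w : pt) : sqnorm (vsub (negp z) (negp w)) = sqnorm (vsub z w).
Proof. unfold sqnorm, vsub, negp. cbn [fst snd]. ring. Qed.

Lemma circle_chord (c : R) (z1 z2 z3 : pt) :
  sqnorm z1 = 1 -> sqnorm z2 = 1 -> sqnorm z3 = 1 -> sigma2 z1 z2 z3 = (c, 0) ->
  sqnorm (vsub z1 z2) = 3 - c ^ 2 + 2 * c * fst (cmul z1 z2).
Proof.
  intros h1 h2 h3 hs. injection hs as hre him.
  destruct z1 as [x1 y1], z2 as [x2 y2], z3 as [x3 y3].
  unfold sqnorm, sigma2, cmul, vsub in *. cbn [fst snd] in *.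
  set (m1 := x1 * x2 - y1 * y2). set (m2 := x1 * y2 + y1 * x2).
  (* [z3 (z1 + z2) = c - z1 z2], and taking norms gives |z1 + z2|^2 = |c - z1 z2|^2. *)
  assert (e1 : x3 * (x1 + x2) - y3 * (y1 + y2) = c - m1) by (unfold m1; lra).
  assert (e2 : x3 * (y1 + y2) + y3 * (x1 + x2) = - m2) by (unfold m2; lra).
  assert (e3 : (x3 * (x1 + x2) - y3 * (y1 + y2)) ^ 2 + (x3 * (y1 + y2) + y3 * (x1 + x2)) ^ 2
               = (x3 ^ 2 + y3 ^ 2) * ((x1 + x2) ^ 2 + (y1 + y2) ^ 2)) by ring.
  rewrite e1, e2, h3 in e3.
  assert (e4 : m1 ^ 2 + m2 ^ 2 = (x1 ^ 2 + y1 ^ 2) * (x2 ^ 2 + y2 ^ 2)) by (unfold m1, m2; ring).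
  rewrite h1, h2 in e4.
  assert (e5 : (x1 - x2) ^ 2 + (y1 - y2) ^ 2 + ((x1 + x2) ^ 2 + (y1 + y2) ^ 2)
               = 2 * (x1 ^ 2 + y1 ^ 2) + 2 * (x2 ^ 2 + y2 ^ 2)) by ring.
  rewrite h1, h2 in e5.
  nra.
Qed.

(* The real part of [(z - w)^2 = - z w |z - w|^2], valid on the unit circle. *)
Lemma vsub_sq_re (z w : pt) : sqnorm z = 1 -> sqnorm w = 1 ->
  (fst z - fst w) ^ 2 - (snd z - snd w) ^ 2 = - sqnorm (vsub z w) * fst (cmul z w).
Proof.
  intros hz hw. destruct z as [x1 y1], w as [x2 y2].
  unfold sqnorm, vsub, cmul in *. cbn [fst snd] in *.
  assert (e : (x1 - x2) ^ 2 - (y1 - y2) ^ 2 + ((x1 - x2) ^ 2 + (y1 - y2) ^ 2) * (x1 * x2 - y1 * y2)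
    = (x1 * x2 - y1 * y2 + 2 * y2 ^ 2 - 1) * (x1 ^ 2 + y1 ^ 2 - 1)
      + (1 + x1 * x2 - 2 * x1 ^ 2 - y1 * y2) * (x2 ^ 2 + y2 ^ 2 - 1)) by ring.
  rewrite hz, hw in e. lra.
Qed.

Lemma circle_chord_pos (c : R) (z w : pt) : -1 < c < 0 -> sqnorm z = 1 -> sqnorm w = 1 ->
  sqnorm (vsub z w) = 3 - c ^ 2 + 2 * c * fst (cmul z w) -> 0 < sqnorm (vsub z w).
Proof.
  intros hc hz hw hD. rewrite hD.
  assert (hm : fst (cmul z w) ^ 2 + snd (cmul z w) ^ 2 = sqnorm z * sqnorm w)
    by (unfold cmul, sqnorm; cbn [fst snd]; ring).
  rewrite hz, hw in hm. pose proof (pow2_ge_0 (snd (cmul z w))).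
  assert (fst (cmul z w) <= 1) by nra. nra.
Qed.

Lemma stretch_on_ellipse (a b : R) (z : pt) : a <> 0 -> b <> 0 -> sqnorm z = 1 ->
  on_ellipse a b (stretch a b z).
Proof.
  intros ha hb hz. unfold on_ellipse, stretch, sqnorm in *. cbn [fst snd]. rewrite <- hz. field. auto.
Qed.

Lemma ellq_stretch (a b : R) (z w : pt) : a <> 0 -> b <> 0 ->
  ellq a b (vsub (stretch a b z) (stretch a b w)) = sqnorm (vsub z w).
Proof. intros ha hb. unfold ellq, stretch, sqnorm, vsub. cbn [fst snd]. field. auto. Qed.

(* The chord [zw] of the circle, of squared length [D], is mapped to a chord of length
   sqrt (((a^2 + b^2) - (a^2 - b^2) Re (zw)) D / 2), which the two relations between
   [a, b, c, k] turn into [D / (2 k)]. *)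
Lemma dist_stretch (a b c k : R) (z w : pt) : 0 < k ->
  2 * k ^ 2 * (a ^ 2 + b ^ 2) = 3 - c ^ 2 -> 2 * k ^ 2 * (a ^ 2 - b ^ 2) = - 2 * c ->
  sqnorm z = 1 -> sqnorm w = 1 ->
  sqnorm (vsub z w) = 3 - c ^ 2 + 2 * c * fst (cmul z w) ->
  Defs.dist (stretch a b z) (stretch a b w) = sqnorm (vsub z w) / (2 * k).
Proof.
  intros hk hsum hdiff hz hw hD.
  pose proof (vsub_sq_re z w hz hw) as hre.
  assert (hD0 : 0 <= sqnorm (vsub z w)) by (unfold sqnorm; nra).
  unfold Defs.dist, stretch. cbn [fst snd].
  rewrite <- (sqrt_pow2 (sqnorm (vsub z w) / (2 * k)))
    by (apply Rmult_le_pos; [lra | apply Rlt_le, Rinv_0_lt_compat; lra]).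
  f_equal.
  set (D := sqnorm (vsub z w)) in *.
  transitivity (((a ^ 2 + b ^ 2) * D + (a ^ 2 - b ^ 2) * ((fst z - fst w) ^ 2 - (snd z - snd w) ^ 2)) / 2);
    [unfold D, sqnorm, vsub; cbn [fst snd]; field|].
  rewrite hre. apply (Rmult_eq_reg_l (4 * k ^ 2)); [|nra].
  transitivity (D * (2 * k ^ 2 * (a ^ 2 + b ^ 2) - 2 * k ^ 2 * (a ^ 2 - b ^ 2) * fst (cmul z w)));
    [field|].
  rewrite hsum, hdiff. replace (3 - c ^ 2 - - 2 * c * fst (cmul z w)) with D by lra. field. lra.
Qed.

(* Witnesses: [c = r - sqrt (r^2 + 3)], the root in (-1, 0) of [c^2 - 2 r c - 3 = 0] where
   [r = (a^2 + b^2) / (a^2 - b^2)], and [k = sqrt (- c / (a^2 - b^2))]. *)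
Lemma poncelet_constants (a b : R) : 0 < b -> b < a ->
  exists c k, -1 < c < 0 /\ 0 < k /\
    2 * k ^ 2 * (a ^ 2 + b ^ 2) = 3 - c ^ 2 /\ 2 * k ^ 2 * (a ^ 2 - b ^ 2) = - 2 * c.
Proof.
  intros hb hab.
  assert (hd : 0 < a ^ 2 - b ^ 2) by nra.
  set (r := (a ^ 2 + b ^ 2) / (a ^ 2 - b ^ 2)).
  assert (hr : 1 < r).
  { unfold r. apply (Rmult_lt_reg_r (a ^ 2 - b ^ 2)); [lra|]. unfold Rdiv.
    rewrite Rmult_assoc, Rinv_l by lra. nra. }
  set (c := r - sqrt (r ^ 2 + 3)).
  assert (hs : sqrt (r ^ 2 + 3) * sqrt (r ^ 2 + 3) = r ^ 2 + 3) by (apply sqrt_sqrt; nra).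
  pose proof (sqrt_pos (r ^ 2 + 3)) as hs0.
  assert (hc : -1 < c < 0) by (unfold c; split; nra).
  assert (hq : c ^ 2 - 2 * r * c - 3 = 0) by (unfold c; nra).
  assert (hK : 0 < - c / (a ^ 2 - b ^ 2)) by (apply Rdiv_lt_0_compat; lra).
  exists c, (sqrt (- c / (a ^ 2 - b ^ 2))).
  rewrite pow2_sqrt by lra.
  repeat split; try lra.
  - apply sqrt_lt_R0. lra.
  - replace (a ^ 2 + b ^ 2) with (r * (a ^ 2 - b ^ 2)) by (unfold r; field; lra).
    field_simplify; lra.
  - field. lra.
Qed.

Section StretchedCircle.

Variables a b c k : R.

Hypotheses (ha : 0 < a) (hb : 0 < b) (hc : -1 < c < 0) (hk : 0 < k)
  (hsum : 2 * k ^ 2 * (a ^ 2 + b ^ 2) = 3 - c ^ 2)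
  (hdiff : 2 * k ^ 2 * (a ^ 2 - b ^ 2) = - 2 * c).

Lemma chord_ratio_stretch (z w : pt) : sqnorm z = 1 -> sqnorm w = 1 ->
  sqnorm (vsub z w) = 3 - c ^ 2 + 2 * c * fst (cmul z w) ->
  chord_ratio a b (stretch a b z) (stretch a b w) = 2 * k.
Proof.
  intros hz hw hD.
  rewrite sqnorm_vsub_sym, cmul_comm in hD.
  pose proof (circle_chord_pos c w z hc hw hz hD) as hpos.
  unfold chord_ratio. rewrite ellq_stretch, (dist_stretch a b c k w z) by (auto; lra).
  field. lra.
Qed.

Lemma stretch_periodic3 (z1 z2 z3 : pt) :
  sqnorm z1 = 1 -> sqnorm z2 = 1 -> sqnorm z3 = 1 -> sigma2 z1 z2 z3 = (c, 0) ->
  periodic3 a b (stretch a b z1) (stretch a b z2) (stretch a b z3).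
Proof.
  intros h1 h2 h3 hs.
  pose proof (circle_chord c z1 z2 z3 h1 h2 h3 hs) as c12.
  rewrite <- sigma2_rot in hs. pose proof (circle_chord c z2 z3 z1 h2 h3 h1 hs) as c23.
  rewrite <- sigma2_rot in hs. pose proof (circle_chord c z3 z1 z2 h3 h1 h2 hs) as c31.
  assert (hdistinct : forall z w, sqnorm z = 1 -> sqnorm w = 1 ->
    sqnorm (vsub z w) = 3 - c ^ 2 + 2 * c * fst (cmul z w) -> stretch a b z <> stretch a b w).
  { intros z w hz hw hD e.
    pose proof (dist_stretch a b c k z w hk hsum hdiff hz hw hD) as hd.
    rewrite e, dist_self in hd.
    pose proof (circle_chord_pos c z w hc hz hw hD).
    assert (sqnorm (vsub z w) = 0) by (apply (Rmult_eq_reg_r (/ (2 * k))); [lra|];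
      apply Rinv_neq_0_compat; lra).
    lra. }
  assert (ha0 : a <> 0) by lra. assert (hb0 : b <> 0) by lra.
  apply periodic3_iff; auto.
  repeat split; try (apply stretch_on_ellipse; auto).
  - intros hdeg.
    destruct (ellipse_collinear a b _ _ _ ha0 hb0 (stretch_on_ellipse a b z1 ha0 hb0 h1)
      (stretch_on_ellipse a b z2 ha0 hb0 h2) (stretch_on_ellipse a b z3 ha0 hb0 h3)
      (hdistinct z1 z2 h1 h2 c12) hdeg) as [e|e].
    + apply (hdistinct z3 z1 h3 h1 c31 e).
    + apply (hdistinct z2 z3 h2 h3 c23). auto.
  - rewrite !chord_ratio_stretch; auto.
  - rewrite !chord_ratio_stretch; auto.
Qed.

End StretchedCircle.

(** * A continuous family of 3-periodics *)

(* With [w = cos t + i sin t], [z2, z3 = w (k +- i s) / 2] and [z1 = (c conj(w) - w) / k], where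
   [k = |c - w^2|] and [k^2 + s^2 = 4]: then [z2 z3 = w^2] and [z1 (z2 + z3) = c - w^2]. *)
Definition fam_u (t : R) : R := cos t ^ 2 - sin t ^ 2.

Definition fam_v (t : R) : R := 2 * cos t * sin t.

Definition fam_k (c t : R) : R := sqrt (1 + c ^ 2 - 2 * c * fam_u t).

Definition fam_s (c t : R) : R := sqrt (3 - c ^ 2 + 2 * c * fam_u t).

Definition fam_z1 (c t : R) : pt :=
  ((c - 1) * cos t / fam_k c t, - (c + 1) * sin t / fam_k c t).

Definition fam_z2 (c t : R) : pt :=
  ((cos t * fam_k c t - sin t * fam_s c t) / 2, (sin t * fam_k c t + cos t * fam_s c t) / 2).

Definition fam_z3 (c t : R) : pt :=
  ((cos t * fam_k c t + sin t * fam_s c t) / 2, (sin t * fam_k c t - cos t * fam_s c t) / 2).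

Definition fam_D1 (c t : R) : R := sqnorm (vsub (fam_z2 c t) (fam_z3 c t)).

Definition fam_D2 (c t : R) : R := sqnorm (vsub (fam_z3 c t) (fam_z1 c t)).

Definition fam_D3 (c t : R) : R := sqnorm (vsub (fam_z1 c t) (fam_z2 c t)).

Definition fam_Y (c t : R) : R := fam_s c t / fam_k c t * fam_v t.

Definition fam_lam (al be ga c t : R) : R := lin3 al be ga (fam_D1 c t) (fam_D2 c t) (fam_D3 c t).

(* [fam_point] is the center of the member [t] of the family (see [fam_center]), with the sides
   replaced by the proportional squared chords [fam_D1], [fam_D2], [fam_D3] of the circle. *)
Definition fam_mass (al be ga c t : R) : R :=
  let D1 := fam_D1 c t in let D2 := fam_D2 c t in let D3 := fam_D3 c t in
  lin_weight al be ga D1 D2 D3 + lin_weight al be ga D2 D3 D1 + lin_weight al be ga D3 D1 D2.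

Definition fam_num (a b al be ga c t : R) : pt :=
  let D1 := fam_D1 c t in let D2 := fam_D2 c t in let D3 := fam_D3 c t in
  wsum (lin_weight al be ga D1 D2 D3) (lin_weight al be ga D2 D3 D1) (lin_weight al be ga D3 D1 D2)
    (stretch a b (fam_z1 c t)) (stretch a b (fam_z2 c t)) (stretch a b (fam_z3 c t)).

Definition fam_point (a b al be ga c t : R) : pt :=
  (fst (fam_num a b al be ga c t) / fam_mass al be ga c t,
   snd (fam_num a b al be ga c t) / fam_mass al be ga c t).

Lemma cos_sin_sq (t : R) : cos t ^ 2 + sin t ^ 2 = 1.
Proof. rewrite <- (sin2_cos2 t). unfold Rsqr. ring. Qed.

Section Family.

Variable c : R.

Hypothesis hc : -1 < c < 0.

Lemma fam_uv (t : R) : fam_u t ^ 2 + fam_v t ^ 2 = 1.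
Proof.
  unfold fam_u, fam_v. transitivity ((cos t ^ 2 + sin t ^ 2) ^ 2); [ring|]. rewrite cos_sin_sq. ring.
Qed.

Lemma fam_u_bound (t : R) : -1 <= fam_u t <= 1.
Proof. pose proof (fam_uv t). pose proof (pow2_ge_0 (fam_v t)). split; nra. Qed.

Lemma fam_k_spec (t : R) : 0 < fam_k c t /\ fam_k c t ^ 2 = 1 + c ^ 2 - 2 * c * fam_u t.
Proof.
  pose proof (fam_u_bound t). unfold fam_k.
  split; [apply sqrt_lt_R0 | apply pow2_sqrt]; nra.
Qed.

Lemma fam_s_spec (t : R) : 0 < fam_s c t /\ fam_s c t ^ 2 = 3 - c ^ 2 + 2 * c * fam_u t.
Proof.
  pose proof (fam_u_bound t). unfold fam_s.
  split; [apply sqrt_lt_R0 | apply pow2_sqrt]; nra.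
Qed.

Lemma fam_on_circle (t : R) :
  sqnorm (fam_z1 c t) = 1 /\ sqnorm (fam_z2 c t) = 1 /\ sqnorm (fam_z3 c t) = 1.
Proof.
  destruct (fam_k_spec t) as [hk0 hk]. destruct (fam_s_spec t) as [_ hs].
  pose proof (cos_sin_sq t) as h.
  unfold sqnorm, fam_z1, fam_z2, fam_z3. cbn [fst snd].
  set (k := fam_k c t) in *. set (s := fam_s c t) in *. unfold fam_u in *.
  assert (hks : (cos t ^ 2 + sin t ^ 2) * (k ^ 2 + s ^ 2) / 4 = 1) by (rewrite h, hk, hs; field).
  repeat split.
  - transitivity (((c ^ 2 + 1) * (cos t ^ 2 + sin t ^ 2) - 2 * c * (cos t ^ 2 - sin t ^ 2)) / k ^ 2);
      [field; lra|].
    rewrite h, hk. field. nra.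
  - rewrite <- hks. field.
  - rewrite <- hks. field.
Qed.

Lemma fam_sigma2 (t : R) : sigma2 (fam_z1 c t) (fam_z2 c t) (fam_z3 c t) = (c, 0).
Proof.
  destruct (fam_k_spec t) as [hk0 hk]. destruct (fam_s_spec t) as [_ hs].
  pose proof (cos_sin_sq t) as h.
  unfold sigma2, cmul, fam_z1, fam_z2, fam_z3. cbn [fst snd].
  set (k := fam_k c t) in *. set (s := fam_s c t) in *. unfold fam_u in *.
  assert (hks : (k ^ 2 + s ^ 2) / 4 - 1 = 0) by (rewrite hk, hs; field).
  f_equal.
  - transitivity (c * (cos t ^ 2 + sin t ^ 2) + (cos t ^ 2 - sin t ^ 2) * ((k ^ 2 + s ^ 2) / 4 - 1));
      [field; lra|].
    rewrite h, hks. ring.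
  - transitivity (2 * cos t * sin t * ((k ^ 2 + s ^ 2) / 4 - 1)); [field; lra|].
    rewrite hks. ring.
Qed.

Lemma fam_chords (t : R) :
  fam_D1 c t = 3 - c ^ 2 + 2 * c * fam_u t /\
  fam_D2 c t = 3 - c * fam_u t - c * fam_Y c t /\ fam_D3 c t = 3 - c * fam_u t + c * fam_Y c t.
Proof.
  destruct (fam_on_circle t) as (h1 & h2 & h3).
  pose proof (fam_sigma2 t) as hsig.
  pose proof (circle_chord c _ _ _ h1 h2 h3 hsig) as c12.
  rewrite <- sigma2_rot, <- sigma2_rot in hsig.
  pose proof (circle_chord c _ _ _ h3 h1 h2 hsig) as c31.
  destruct (fam_k_spec t) as [hk0 hk]. destruct (fam_s_spec t) as [_ hs].
  pose proof (cos_sin_sq t) as h.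
  unfold fam_D1, fam_D2, fam_D3. rewrite c31, c12.
  unfold sqnorm, cmul, vsub, fam_z1, fam_z2, fam_z3, fam_Y, fam_v. cbn [fst snd].
  set (k := fam_k c t) in *. set (s := fam_s c t) in *. unfold fam_u in *.
  repeat split.
  - transitivity ((cos t ^ 2 + sin t ^ 2) * s ^ 2); [field|]. rewrite h, hs. ring.
  - transitivity (3 - c ^ 2 + c * (c * (cos t ^ 2 + sin t ^ 2) - (cos t ^ 2 - sin t ^ 2))
      - c * (s / k * (2 * cos t * sin t))); [field; lra|].
    rewrite h. ring.
  - transitivity (3 - c ^ 2 + c * (c * (cos t ^ 2 + sin t ^ 2) - (cos t ^ 2 - sin t ^ 2))
      + c * (s / k * (2 * cos t * sin t))); [field; lra|].
    rewrite h. ring.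
Qed.

Lemma fam_antipodal (t : R) :
  fam_z1 c (t + PI) = negp (fam_z1 c t) /\ fam_z2 c (t + PI) = negp (fam_z2 c t) /\
  fam_z3 c (t + PI) = negp (fam_z3 c t).
Proof.
  pose proof (proj1 (fam_k_spec t)).
  assert (hu : fam_u (t + PI) = fam_u t) by (unfold fam_u; rewrite neg_cos, neg_sin; ring).
  unfold fam_z1, fam_z2, fam_z3, fam_k, fam_s, negp. rewrite hu, neg_cos, neg_sin. cbn [fst snd].
  fold (fam_k c t) (fam_s c t). repeat split; f_equal; field; lra.
Qed.

Lemma fam_lam_eq (al be ga t : R) : al + be + ga = 0 ->
  fam_lam al be ga c t = c * (al * (3 * fam_u t - c) + (ga - be) * fam_Y c t).
Proof.
  intros hs. destruct (fam_chords t) as (d1 & d2 & d3).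
  unfold fam_lam, lin3. rewrite d1, d2, d3. replace ga with (- al - be) by lra. ring.
Qed.

Lemma fam_XY_neq0 (t : R) : ~ (3 * fam_u t - c = 0 /\ fam_Y c t = 0).
Proof.
  intros [hX hY]. destruct (fam_k_spec t) as [hk _]. destruct (fam_s_spec t) as [hs _].
  assert (hv : fam_v t = 0).
  { unfold fam_Y in hY. apply Rmult_integral in hY as [h|h]; [|auto].
    exfalso. unfold Rdiv in h. apply Rmult_integral in h as [h|h]; [lra|].
    apply (Rinv_neq_0_compat _ (Rgt_not_eq _ _ hk) h). }
  pose proof (fam_uv t) as huv. rewrite hv in huv.
  assert (fam_u t = c / 3) by lra. nra.
Qed.

Ltac fam_continuity :=
  cbv beta delta [fam_num fam_mass fam_lam wsum stretch lin_weight lin3 fam_D1 fam_D2 fam_D3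
    sqnorm vsub fam_z1 fam_z2 fam_z3 fam_k fam_s fam_u]; cbn [fst snd]; reg;
  intros; match goal with |- context [cos ?x] => pose proof (fam_u_bound x) end; unfold fam_u in *;
  try (apply Rgt_not_eq, sqrt_lt_R0); nra.

Lemma fam_lam_continuous (al be ga : R) : continuity (fam_lam al be ga c).
Proof. fam_continuity. Qed.

Lemma fam_mass_continuous (al be ga : R) : continuity (fam_mass al be ga c).
Proof. fam_continuity. Qed.

Lemma fam_num_continuous (a b al be ga : R) :
  continuity (fun t => fst (fam_num a b al be ga c t)) /\
  continuity (fun t => snd (fam_num a b al be ga c t)).
Proof. split; fam_continuity. Qed.

End Family.

Lemma fam_D_antipodal (c t : R) : -1 < c < 0 ->
  fam_D1 c (t + PI) = fam_D1 c t /\ fam_D2 c (t + PI) = fam_D2 c t /\ fam_D3 c (t + PI) = fam_D3 c t.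
Proof.
  intros hc. destruct (fam_antipodal c hc t) as (e1 & e2 & e3).
  unfold fam_D1, fam_D2, fam_D3. rewrite e1, e2, e3, !sqnorm_vsub_negp. auto.
Qed.

Lemma fam_lam_antipodal (al be ga c t : R) : -1 < c < 0 ->
  fam_lam al be ga c (t + PI) = fam_lam al be ga c t.
Proof. intros hc. destruct (fam_D_antipodal c t hc) as (e1 & e2 & e3). unfold fam_lam. congruence. Qed.

Lemma fam_mass_antipodal (al be ga c t : R) : -1 < c < 0 ->
  fam_mass al be ga c (t + PI) = fam_mass al be ga c t.
Proof. intros hc. destruct (fam_D_antipodal c t hc) as (e1 & e2 & e3). unfold fam_mass. congruence. Qed.

Lemma fam_num_antipodal (a b al be ga c t : R) : -1 < c < 0 ->
  fam_num a b al be ga c (t + PI) = negp (fam_num a b al be ga c t).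
Proof.
  intros hc. destruct (fam_D_antipodal c t hc) as (d1 & d2 & d3).
  destruct (fam_antipodal c hc t) as (e1 & e2 & e3).
  unfold fam_num. rewrite d1, d2, d3, e1, e2, e3. unfold wsum, stretch, negp. cbn [fst snd]. f_equal; ring.
Qed.

(* Up to the factor [c] these are [fam_lam al be ga], [fam_lam ga al be], [fam_lam be ga al]
   (see [fam_lam_eq]); they sum to zero and any two of them are independent. *)
Lemma lin_forms_vanish (al be ga X Y : R) : al + be + ga = 0 -> ~ (al = 0 /\ be = 0 /\ ga = 0) ->
  (ga * X + (be - al) * Y) * (be * X + (al - ga) * Y) = 0 ->
  (be * X + (al - ga) * Y) * (al * X + (ga - be) * Y) = 0 ->
  (al * X + (ga - be) * Y) * (ga * X + (be - al) * Y) = 0 -> X = 0 /\ Y = 0.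
Proof.
  intros hs hnz h1 h2 h3.
  replace ga with (- al - be) in * by lra.
  assert (hq : 0 < al ^ 2 + al * be + be ^ 2).
  { destruct (Req_dec al 0) as [ha|ha]; [assert (be <> 0) by (intros hb; apply hnz; lra); subst al;
      pose proof (pow2_pos be); nra|].
    pose proof (pow2_pos al ha). nra. }
  assert (hall : al * X + (- al - be - be) * Y = 0 /\ (- al - be) * X + (be - al) * Y = 0).
  { apply Rmult_integral in h1 as [h1|h1]; apply Rmult_integral in h2 as [h2|h2];
      apply Rmult_integral in h3 as [h3|h3]; split; lra. }
  destruct hall as [f1 f2].
  assert (hX : (al ^ 2 + al * be + be ^ 2) * X = 0).
  { transitivity (- ((be - al) * (al * X + (- al - be - be) * Y)
      - (- al - be - be) * ((- al - be) * X + (be - al) * Y)) / 2); [field|]. rewrite f1, f2. field. }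
  assert (hY : (al ^ 2 + al * be + be ^ 2) * Y = 0).
  { transitivity (- (al * ((- al - be) * X + (be - al) * Y)
      - (- al - be) * (al * X + (- al - be - be) * Y)) / 2); [field|]. rewrite f1, f2. field. }
  apply Rmult_integral in hX as [hX|hX]; [lra|]. apply Rmult_integral in hY as [hY|hY]; [lra|].
  auto.
Qed.

(** * Parameters where the center is defined *)

Lemma cubic_four_roots (A B C D x1 x2 x3 x4 : R) :
  x1 <> x2 -> x1 <> x3 -> x1 <> x4 -> x2 <> x3 -> x2 <> x4 -> x3 <> x4 ->
  A * x1 ^ 3 + B * x1 ^ 2 + C * x1 + D = 0 -> A * x2 ^ 3 + B * x2 ^ 2 + C * x2 + D = 0 ->
  A * x3 ^ 3 + B * x3 ^ 2 + C * x3 + D = 0 -> A * x4 ^ 3 + B * x4 ^ 2 + C * x4 + D = 0 ->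
  A = 0 /\ B = 0.
Proof.
  intros d12 d13 d14 d23 d24 d34 h1 h2 h3 h4.
  assert (n12 : x1 - x2 <> 0) by lra. assert (n13 : x1 - x3 <> 0) by lra. assert (n14 : x1 - x4 <> 0) by lra.
  assert (n23 : x2 - x3 <> 0) by lra. assert (n24 : x2 - x4 <> 0) by lra. assert (n34 : x3 - x4 <> 0) by lra.
  set (p x := A * x ^ 3 + B * x ^ 2 + C * x + D).
  change (p x1 = 0) in h1. change (p x2 = 0) in h2. change (p x3 = 0) in h3. change (p x4 = 0) in h4.
  (* Lagrange interpolation: the leading coefficients are divided differences of [p]. *)
  assert (hA : A = p x1 / ((x1 - x2) * (x1 - x3) * (x1 - x4)) + p x2 / ((x2 - x1) * (x2 - x3) * (x2 - x4))
                 + p x3 / ((x3 - x1) * (x3 - x2) * (x3 - x4)) + p x4 / ((x4 - x1) * (x4 - x2) * (x4 - x3)))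
    by (unfold p; field; repeat split; lra).
  rewrite h1, h2, h3, h4 in hA.
  assert (A0 : A = 0) by (rewrite hA; field; repeat split; lra).
  split; [exact A0|].
  assert (hB : B = p x1 / ((x1 - x2) * (x1 - x3)) + p x2 / ((x2 - x1) * (x2 - x3))
                 + p x3 / ((x3 - x1) * (x3 - x2)))
    by (unfold p; rewrite A0; field; repeat split; lra).
  rewrite h1, h2, h3 in hB. rewrite hB. field. repeat split; lra.
Qed.

(* Squaring [e (3 u - c) + d Y = 0], with [Y = s v / k], eliminates the square roots. *)
Definition lam_cubic (c e d u : R) : R :=
  e ^ 2 * (3 * u - c) ^ 2 * (1 + c ^ 2 - 2 * c * u) - d ^ 2 * (3 - c ^ 2 + 2 * c * u) * (1 - u ^ 2).

Lemma fam_lam_cubic (c e d t : R) : -1 < c < 0 ->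
  e * (3 * fam_u t - c) + d * fam_Y c t = 0 -> lam_cubic c e d (fam_u t) = 0.
Proof.
  intros hc h. destruct (fam_k_spec c hc t) as [hk0 hk]. destruct (fam_s_spec c hc t) as [_ hs].
  pose proof (fam_uv t) as huv. unfold fam_Y in h.
  assert (h' : e * (3 * fam_u t - c) * fam_k c t = - (d * fam_s c t * fam_v t)).
  { apply (Rmult_eq_reg_r (/ fam_k c t)); [|apply Rinv_neq_0_compat; lra].
    transitivity (e * (3 * fam_u t - c)); [field; lra|].
    transitivity (- (d * (fam_s c t / fam_k c t * fam_v t))); [lra|field; lra]. }
  assert (hsq : (e * (3 * fam_u t - c) * fam_k c t) ^ 2 = (d * fam_s c t * fam_v t) ^ 2)
    by (rewrite h'; ring).
  unfold lam_cubic. rewrite <- hk, <- hs. replace (1 - fam_u t ^ 2) with (fam_v t ^ 2) by lra.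
  transitivity ((e * (3 * fam_u t - c) * fam_k c t) ^ 2 - (d * fam_s c t * fam_v t) ^ 2); [ring|].
  rewrite hsq. ring.
Qed.

Lemma lam_cubic_four_roots (c e d u1 u2 u3 u4 : R) : -1 < c < 0 ->
  u1 <> u2 -> u1 <> u3 -> u1 <> u4 -> u2 <> u3 -> u2 <> u4 -> u3 <> u4 ->
  lam_cubic c e d u1 = 0 -> lam_cubic c e d u2 = 0 -> lam_cubic c e d u3 = 0 -> lam_cubic c e d u4 = 0 ->
  e = 0 /\ d = 0.
Proof.
  intros hc d12 d13 d14 d23 d24 d34 h1 h2 h3 h4.
  assert (hcoef : forall u, lam_cubic c e d u =
    (2 * c * (d ^ 2 - 9 * e ^ 2)) * u ^ 3 + (e ^ 2 * (9 + 21 * c ^ 2) + d ^ 2 * (3 - c ^ 2)) * u ^ 2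
    + (e ^ 2 * (-6 * c - 8 * c ^ 3) - 2 * c * d ^ 2) * u + (e ^ 2 * c ^ 2 * (1 + c ^ 2) - d ^ 2 * (3 - c ^ 2)))
    by (intros; unfold lam_cubic; ring).
  rewrite hcoef in h1, h2, h3, h4.
  destruct (cubic_four_roots _ _ _ _ _ _ _ _ d12 d13 d14 d23 d24 d34 h1 h2 h3 h4) as [hA hB].
  assert (hd : d ^ 2 = 9 * e ^ 2).
  { apply Rmult_integral in hA as [hA|hA]; [|lra]. apply Rmult_integral in hA as [hA|hA]; lra. }
  rewrite hd in hB.
  assert (he : e ^ 2 = 0) by nra.
  assert (e = 0) by nra. split; [auto|]. rewrite he in hd. nra.
Qed.

(* An interval on which [fam_u t = cos (2 t)] is strictly monotone. *)
Definition window (l h : R) : Prop := (0 <= l /\ h <= PI / 2) \/ (PI / 2 <= l /\ h <= PI).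

Lemma window_sub (l h l' h' : R) : window l h -> l <= l' -> h' <= h -> window l' h'.
Proof. unfold window. lra. Qed.

Lemma fam_u_cos (t : R) : fam_u t = cos (2 * t).
Proof. unfold fam_u. rewrite cos_2a. ring. Qed.

Lemma fam_u_window_inj (l h x y : R) : window l h -> l <= x -> x < y -> y <= h -> fam_u x <> fam_u y.
Proof.
  intros w hx hxy hy. rewrite !fam_u_cos. pose proof PI_RGT_0.
  destruct w as [w|w].
  - assert (cos (2 * y) < cos (2 * x)) by (apply cos_decreasing_1; lra). lra.
  - assert (cos (2 * x) < cos (2 * y)) by (apply cos_increasing_1; lra). lra.
Qed.

Lemma window_near (t0 d : R) : 0 <= t0 <= PI -> 0 < d ->
  exists l h, window l h /\ l < h /\ t0 - d < l /\ h < t0 + d.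
Proof.
  intros ht hd. pose proof PI_RGT_0.
  destruct (Rlt_le_dec t0 (PI / 2)) as [h1|h1]; [|destruct (Rlt_le_dec t0 PI) as [h2|h2]].
  - exists t0, (Rmin (t0 + d / 2) (PI / 2)). unfold window.
    pose proof (Rmin_l (t0 + d / 2) (PI / 2)). pose proof (Rmin_r (t0 + d / 2) (PI / 2)).
    assert (t0 < Rmin (t0 + d / 2) (PI / 2)) by (apply Rmin_glb_lt; lra). lra.
  - exists t0, (Rmin (t0 + d / 2) PI). unfold window.
    pose proof (Rmin_l (t0 + d / 2) PI). pose proof (Rmin_r (t0 + d / 2) PI).
    assert (t0 < Rmin (t0 + d / 2) PI) by (apply Rmin_glb_lt; lra). lra.
  - exists (Rmax (t0 - d / 2) (PI / 2)), t0. unfold window.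
    pose proof (Rmax_l (t0 - d / 2) (PI / 2)). pose proof (Rmax_r (t0 - d / 2) (PI / 2)).
    assert (Rmax (t0 - d / 2) (PI / 2) < t0) by (apply Rmax_lub_lt; lra). lra.
Qed.


(* Where [fam_lam] vanishes, [fam_u] is one of the at most three roots of [lam_cubic]. *)
Lemma fam_lam_nonzero_in_window (c al be ga l h : R) :
  -1 < c < 0 -> al + be + ga = 0 -> ~ (al = 0 /\ be = 0 /\ ga = 0) -> window l h -> l < h ->
  exists x, l < x < h /\ fam_lam al be ga c x <> 0.
Proof.
  intros hc habg hnz w hlh. set (d := (h - l) / 5).
  assert (root : forall x, fam_lam al be ga c x = 0 -> lam_cubic c al (ga - be) (fam_u x) = 0).
  { intros x hx. apply fam_lam_cubic; auto. rewrite fam_lam_eq in hx by auto.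
    apply Rmult_integral in hx as [hx|hx]; [lra|auto]. }
  assert (inj : forall x y, l <= x -> x < y -> y <= h -> fam_u x <> fam_u y)
    by (intros; apply (fam_u_window_inj l h); auto).
  destruct (Req_dec (fam_lam al be ga c (l + d)) 0) as [z1|n1];
    [|exists (l + d); split; [unfold d; lra | auto]].
  destruct (Req_dec (fam_lam al be ga c (l + 2 * d)) 0) as [z2|n2];
    [|exists (l + 2 * d); split; [unfold d; lra | auto]].
  destruct (Req_dec (fam_lam al be ga c (l + 3 * d)) 0) as [z3|n3];
    [|exists (l + 3 * d); split; [unfold d; lra | auto]].
  destruct (Req_dec (fam_lam al be ga c (l + 4 * d)) 0) as [z4|n4];
    [|exists (l + 4 * d); split; [unfold d; lra | auto]].
  exfalso. apply hnz.
  destruct (lam_cubic_four_roots c al (ga - be) (fam_u (l + d)) (fam_u (l + 2 * d))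
    (fam_u (l + 3 * d)) (fam_u (l + 4 * d)) hc) as [e1 e2];
    try (apply inj; unfold d; lra); try (apply root; auto).
  lra.
Qed.

Lemma fam_good_in_window (c al be ga l h : R) :
  -1 < c < 0 -> al + be + ga = 0 -> ~ (al = 0 /\ be = 0 /\ ga = 0) -> window l h -> l < h ->
  exists x, l < x < h /\
    fam_lam al be ga c x <> 0 /\ fam_lam ga al be c x <> 0 /\ fam_lam be ga al c x <> 0.
Proof.
  intros hc habg hnz w hlh.
  destruct (fam_lam_nonzero_in_window c al be ga l h hc habg hnz w hlh) as (x1 & hx1 & n1).
  destruct (continuous_nonzero_interval _ l h x1 (fam_lam_continuous c hc al be ga x1) n1 hx1)
    as (l1 & h1 & hl1 & hlh1 & hh1 & N1).
  destruct (fam_lam_nonzero_in_window c ga al be l1 h1 hc ltac:(lra) ltac:(tauto)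
    (window_sub l h l1 h1 w hl1 hh1) hlh1) as (x2 & hx2 & n2).
  destruct (continuous_nonzero_interval _ l1 h1 x2 (fam_lam_continuous c hc ga al be x2) n2 hx2)
    as (l2 & h2 & hl2 & hlh2 & hh2 & N2).
  destruct (fam_lam_nonzero_in_window c be ga al l2 h2 hc ltac:(lra) ltac:(tauto)
    (window_sub l h l2 h2 w ltac:(lra) ltac:(lra)) hlh2) as (x3 & hx3 & n3).
  exists x3. split; [lra|]. split; [apply N1; lra|]. split; [apply N2; lra | exact n3].
Qed.

Lemma fam_good_near (c al be ga t0 d : R) :
  -1 < c < 0 -> al + be + ga = 0 -> ~ (al = 0 /\ be = 0 /\ ga = 0) -> 0 <= t0 <= PI -> 0 < d ->
  exists t, Rabs (t - t0) < d /\
    fam_lam al be ga c t <> 0 /\ fam_lam ga al be c t <> 0 /\ fam_lam be ga al c t <> 0.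
Proof.
  intros hc habg hnz ht hd.
  destruct (window_near t0 d ht hd) as (l & h & w & hlh & hl & hh).
  destruct (fam_good_in_window c al be ga l h hc habg hnz w hlh) as (t & hlt & good).
  exists t. split; [apply Rabs_def1; lra | exact good].
Qed.

(** * Density of the locus *)

Section EllipseFamily.

Variables a b c k al be ga : R.

Hypotheses (ha : 0 < a) (hb : 0 < b) (hc : -1 < c < 0) (hk : 0 < k)
  (hsum : 2 * k ^ 2 * (a ^ 2 + b ^ 2) = 3 - c ^ 2)
  (hdiff : 2 * k ^ 2 * (a ^ 2 - b ^ 2) = - 2 * c)
  (habg : al + be + ga = 0) (hnz : ~ (al = 0 /\ be = 0 /\ ga = 0)).

Let P1 t := stretch a b (fam_z1 c t).

Let P2 t := stretch a b (fam_z2 c t).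

Let P3 t := stretch a b (fam_z3 c t).

Lemma fam_periodic3 (t : R) : periodic3 a b (P1 t) (P2 t) (P3 t).
Proof.
  destruct (fam_on_circle c hc t) as (h1 & h2 & h3).
  apply (stretch_periodic3 a b c k); auto. apply fam_sigma2, hc.
Qed.

Lemma fam_sides (t : R) :
  Defs.dist (P2 t) (P3 t) = fam_D1 c t / (2 * k) /\ Defs.dist (P3 t) (P1 t) = fam_D2 c t / (2 * k) /\
  Defs.dist (P1 t) (P2 t) = fam_D3 c t / (2 * k).
Proof.
  destruct (fam_on_circle c hc t) as (h1 & h2 & h3).
  pose proof (fam_sigma2 c hc t) as hs.
  pose proof (circle_chord c _ _ _ h1 h2 h3 hs) as c12.
  rewrite <- sigma2_rot in hs. pose proof (circle_chord c _ _ _ h2 h3 h1 hs) as c23.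
  rewrite <- sigma2_rot in hs. pose proof (circle_chord c _ _ _ h3 h1 h2 hs) as c31.
  unfold P1, P2, P3, fam_D1, fam_D2, fam_D3. repeat split; apply (dist_stretch a b c k); auto.
Qed.

Lemma fam_center (t : R) :
  fam_lam al be ga c t <> 0 -> fam_lam ga al be c t <> 0 -> fam_lam be ga al c t <> 0 ->
  fam_mass al be ga c t <> 0 ->
  center (hlin al be ga) (P1 t) (P2 t) (P3 t) = Some (fam_point a b al be ga c t).
Proof.
  intros l1 l2 l3 hm.
  destruct (fam_sides t) as (s1 & s2 & s3).
  apply center_hlin_Some. rewrite s1, s2, s3, !lin3_scale, !lin_weight_scale.
  change (lin3 al be ga (fam_D1 c t) (fam_D2 c t) (fam_D3 c t)) with (fam_lam al be ga c t).
  replace (lin3 al be ga (fam_D2 c t) (fam_D3 c t) (fam_D1 c t)) with (fam_lam ga al be c t)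
    by (unfold fam_lam, lin3; ring).
  replace (lin3 al be ga (fam_D3 c t) (fam_D1 c t) (fam_D2 c t)) with (fam_lam be ga al c t)
    by (unfold fam_lam, lin3; ring).
  assert (hk2 : 2 * k <> 0) by lra.
  assert (hk3 : (/ (2 * k)) ^ 3 <> 0) by (apply pow_nonzero, Rinv_neq_0_compat, hk2).
  repeat split.
  - unfold Rdiv. apply Rmult_integral_contrapositive. split; auto. apply Rinv_neq_0_compat, hk2.
  - unfold Rdiv. apply Rmult_integral_contrapositive. split; auto. apply Rinv_neq_0_compat, hk2.
  - unfold Rdiv. apply Rmult_integral_contrapositive. split; auto. apply Rinv_neq_0_compat, hk2.
  - intros h. apply hm. unfold fam_mass. cbv zeta.
    apply (Rmult_eq_reg_l ((/ (2 * k)) ^ 3)); [|auto]. rewrite Rmult_0_r, <- h. ring.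
  - rewrite barycenter_scale by auto. reflexivity.
Qed.

Lemma fam_ellq_num (t : R) : ellq a b (fam_num a b al be ga c t) = fam_mass al be ga c t ^ 2.
Proof.
  destruct (fam_on_circle c hc t) as (h1 & h2 & h3).
  assert (ha0 : a <> 0) by lra. assert (hb0 : b <> 0) by lra.
  apply (ellq_wsum_lin_weight a b al be ga 1); auto; try (apply stretch_on_ellipse; auto);
    rewrite ellq_stretch by auto; unfold fam_D1, fam_D2, fam_D3; ring.
Qed.

Lemma fam_mass_neq0 (t : R) : fam_mass al be ga c t <> 0.
Proof.
  (* A zero mass forces a zero numerator, hence zero weights, hence two vanishing [fam_lam]. *)
  intros hm.
  assert (ha0 : a <> 0) by lra. assert (hb0 : b <> 0) by lra.
  pose proof (fam_ellq_num t) as hq. rewrite hm, pow_i in hq by lia.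
  apply ellq_eq0 in hq; [|auto|auto].
  destruct (fam_periodic3 t) as [hnd _].
  destruct (wsum_eq0_nondegenerate _ _ _ _ _ _ hnd hm hq) as (w1 & w2 & w3).
  destruct (fam_sides t) as (s1 & s2 & s3).
  destruct (nondegenerate_sides_pos _ _ _ hnd) as (p1 & p2 & p3).
  rewrite s1 in p1. rewrite s2 in p2. rewrite s3 in p3.
  assert (hD : forall D, 0 < D / (2 * k) -> D <> 0) by (intros D hD e; rewrite e in hD; lra).
  unfold lin_weight in w1, w2, w3.
  set (l1 := fam_lam al be ga c t). set (l2 := fam_lam ga al be c t). set (l3 := fam_lam be ga al c t).
  assert (e1 : lin3 al be ga (fam_D2 c t) (fam_D3 c t) (fam_D1 c t) = l2) by (unfold l2, fam_lam, lin3; ring).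
  assert (e2 : lin3 al be ga (fam_D3 c t) (fam_D1 c t) (fam_D2 c t) = l3) by (unfold l3, fam_lam, lin3; ring).
  assert (e3 : lin3 al be ga (fam_D1 c t) (fam_D2 c t) (fam_D3 c t) = l1) by reflexivity.
  rewrite e1, e2 in w1. rewrite e2, e3 in w2. rewrite e3, e1 in w3.
  rewrite Rmult_assoc in w1, w2, w3.
  apply Rmult_integral in w1 as [w1|w1]; [exact (hD _ p1 w1)|].
  apply Rmult_integral in w2 as [w2|w2]; [exact (hD _ p2 w2)|].
  apply Rmult_integral in w3 as [w3|w3]; [exact (hD _ p3 w3)|].
  unfold l1, l2, l3 in *. rewrite !fam_lam_eq in w1, w2, w3 by lra.
  apply (fam_XY_neq0 c hc t).
  apply (lin_forms_vanish al be ga); auto.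
  - apply (Rmult_eq_reg_l (c * c)); [|nra]. rewrite Rmult_0_r, <- w1. ring.
  - apply (Rmult_eq_reg_l (c * c)); [|nra]. rewrite Rmult_0_r, <- w2. ring.
  - apply (Rmult_eq_reg_l (c * c)); [|nra]. rewrite Rmult_0_r, <- w3. ring.
Qed.

Lemma fam_on_ellipse (t : R) : on_ellipse a b (fam_point a b al be ga c t).
Proof. apply barycenter_on_ellipse; try lra. apply fam_mass_neq0. apply fam_ellq_num. Qed.

Lemma fam_in_locus (t : R) :
  fam_lam al be ga c t <> 0 -> fam_lam ga al be c t <> 0 -> fam_lam be ga al c t <> 0 ->
  locus a b (hlin al be ga) (fam_point a b al be ga c t).
Proof.
  intros l1 l2 l3. exists (P1 t), (P2 t), (P3 t). split; [apply fam_periodic3|].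
  apply fam_center; auto. apply fam_mass_neq0.
Qed.

Lemma fam_point_antipodal (t : R) : fam_point a b al be ga c (t + PI) = negp (fam_point a b al be ga c t).
Proof.
  pose proof (fam_mass_neq0 t).
  unfold fam_point. rewrite fam_num_antipodal, fam_mass_antipodal by auto.
  unfold negp. cbn [fst snd]. f_equal; field; auto.
Qed.

Lemma fam_point_continuous (t : R) :
  continuity_pt (fun t => fst (fam_point a b al be ga c t)) t /\
  continuity_pt (fun t => snd (fam_point a b al be ga c t)) t.
Proof.
  destruct (fam_num_continuous c hc a b al be ga) as [cx cy].
  split; apply (continuity_pt_div _ (fam_mass al be ga c)); auto;
    apply fam_mass_continuous || apply fam_mass_neq0; auto.
Qed.

(* Since the family turns by a half-turn as [t] runs over [0, PI], the intermediate value theorem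
   puts its center on the line through [X] at some [t]. *)
Lemma fam_point_reaches (X : pt) : on_ellipse a b X ->
  exists t, 0 <= t <= PI /\ (fam_point a b al be ga c t = X \/ fam_point a b al be ga c t = negp X).
Proof.
  intros hX.
  set (N := fam_num a b al be ga c). set (F t := cross (N t) X).
  assert (hF : continuity F).
  { destruct (fam_num_continuous c hc a b al be ga) as [cx cy]. intros t.
    apply (continuity_pt_minus (fun t => fst (N t) * snd X) (fun t => snd (N t) * fst X));
      [apply (continuity_pt_mult _ (fun _ => snd X)) | apply (continuity_pt_mult _ (fun _ => fst X))];
      auto; apply continuity_pt_const; intros ? ?; reflexivity. }
  assert (hsign : F 0 * F PI <= 0).
  { unfold F. replace PI with (0 + PI) by ring. unfold N. rewrite fam_num_antipodal by auto.
    fold N. unfold cross, negp. cbn [fst snd].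
    set (u := fst (N 0) * snd X - snd (N 0) * fst X).
    replace (- fst (N 0) * snd X - - snd (N 0) * fst X) with (- u) by (unfold u; ring). nra. }
  destruct (IVT_cor F 0 PI hF (Rlt_le _ _ PI_RGT_0) hsign) as (t & ht & hFt).
  exists t. split; [exact ht|].
  pose proof (fam_mass_neq0 t) as hm.
  apply (ellipse_same_line a b); try lra; [exact hX | apply fam_on_ellipse|].
  unfold F, cross in hFt. unfold fam_point, cross. fold N. cbn [fst snd].
  transitivity (- (fst (N t) * snd X - snd (N t) * fst X) / fam_mass al be ga c t); [field; exact hm|].
  rewrite hFt. field. exact hm.
Qed.

Lemma fam_locus_near (t0 eps : R) : 0 <= t0 <= PI -> 0 < eps ->
  exists t, Defs.dist (fam_point a b al be ga c t0) (fam_point a b al be ga c t) < eps /\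
    locus a b (hlin al be ga) (fam_point a b al be ga c t) /\
    locus a b (hlin al be ga) (fam_point a b al be ga c (t + PI)).
Proof.
  intros ht0 heps.
  destruct (fam_point_continuous t0) as [cx cy].
  destruct (continuity_pt_eps _ t0 (eps / 2) cx ltac:(lra)) as (d1 & hd1 & H1).
  destruct (continuity_pt_eps _ t0 (eps / 2) cy ltac:(lra)) as (d2 & hd2 & H2).
  destruct (fam_good_near c al be ga t0 (Rmin d1 d2) hc habg hnz ht0 ltac:(apply Rmin_pos; auto))
    as (t & ht & l1 & l2 & l3).
  exists t. split; [|split].
  - pose proof (Rmin_l d1 d2). pose proof (Rmin_r d1 d2).
    pose proof (H1 t ltac:(lra)). pose proof (H2 t ltac:(lra)).
    eapply Rle_lt_trans; [apply dist_le_abs|].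
    rewrite (Rabs_minus_sym (fst (fam_point a b al be ga c t0))),
      (Rabs_minus_sym (snd (fam_point a b al be ga c t0))).
    lra.
  - apply fam_in_locus; auto.
  - apply fam_in_locus; rewrite fam_lam_antipodal; auto.
Qed.

Lemma fam_locus_dense (X : pt) : on_ellipse a b X -> in_closure (locus a b (hlin al be ga)) X.
Proof.
  intros hX eps heps.
  destruct (fam_point_reaches X hX) as (t0 & ht0 & hdir).
  destruct (fam_locus_near t0 eps ht0 heps) as (t & hd & hl & hlPI).
  destruct hdir as [e|e].
  - exists (fam_point a b al be ga c t). rewrite <- e. auto.
  - exists (fam_point a b al be ga c (t + PI)). split; [exact hlPI|].
    rewrite fam_point_antipodal, <- (negp_involutive X), dist_negp, <- e. exact hd.
Qed.

End EllipseFamily.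

Lemma locus_hlin_dense (a b al be ga : R) (X : pt) : 0 < b -> b < a ->
  al + be + ga = 0 -> ~ (al = 0 /\ be = 0 /\ ga = 0) ->
  on_ellipse a b X -> in_closure (locus a b (hlin al be ga)) X.
Proof.
  intros hb hab habg hnz hX.
  destruct (poncelet_constants a b hb hab) as (c & k & hc & hk & hsum & hdiff).
  apply (fam_locus_dense a b c k); auto; lra.
Qed.





Lemma hlin_center_locus (a b al be ga : R) : 0 < b -> b < a ->
  al + be + ga = 0 -> ~ (al = 0 /\ be = 0 /\ ga = 0) ->
  (forall P1 P2 P3 X, periodic3 a b P1 P2 P3 ->
     center (hlin al be ga) P1 P2 P3 = Some X -> on_ellipse a b X) /\
  (forall X, in_closure (locus a b (hlin al be ga)) X <-> on_ellipse a b X).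
Proof.
  intros hb hab habg hnz.
  assert (hcenter : forall P1 P2 P3 X, periodic3 a b P1 P2 P3 ->
    center (hlin al be ga) P1 P2 P3 = Some X -> on_ellipse a b X)
    by (intros; eapply center_hlin_on_ellipse; eauto; lra).
  split; [exact hcenter|]. intros X. split.
  - apply closure_on_ellipse; try lra. intros Y (P1 & P2 & P3 & hp & hc). eapply hcenter; eauto.
  - apply locus_hlin_dense; auto.
Qed.

Lemma h88_hlin : h88 = hlin (-2) 1 1.
Proof.
  apply functional_extensionality. intros s1. apply functional_extensionality. intros s2.
  apply functional_extensionality. intros s3. unfold h88, hlin, lin3.
  replace (-2 * s1 + 1 * s2 + 1 * s3) with (s2 + s3 - 2 * s1) by ring. reflexivity.
Qed.

Lemma h100_hlin : h100 = hlin 0 1 (-1).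
Proof.
  apply functional_extensionality. intros s1. apply functional_extensionality. intros s2.
  apply functional_extensionality. intros s3. unfold h100, hlin, lin3.
  replace (0 * s1 + 1 * s2 + -1 * s3) with (s2 - s3) by ring. reflexivity.
Qed.

Theorem theorem1 (a b : R) (hab : a > b) (hb : b > 0) :
  (forall P1 P2 P3 X, periodic3 a b P1 P2 P3 ->
     center h88 P1 P2 P3 = Some X -> on_ellipse a b X) /\
  (forall X, in_closure (locus a b h88) X <-> on_ellipse a b X) /\
  (forall P1 P2 P3 X, periodic3 a b P1 P2 P3 ->
     center h100 P1 P2 P3 = Some X -> on_ellipse a b X) /\
  (forall X, in_closure (locus a b h100) X <-> on_ellipse a b X).
Proof.
  rewrite h88_hlin, h100_hlin.
  destruct (hlin_center_locus a b (-2) 1 1) as [H88c H88l]; try lra.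
  destruct (hlin_center_locus a b 0 1 (-1)) as [H100c H100l]; try lra.
  auto.
Qed.
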